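(* Let $m\ge 2$ be a prime and $n\ge 1$ an integer. If $p(m,n)\neq 0$, then $n \equiv r \pmod{m^2}$ for some $r\in\{-1,0,1,\dots,m-2\}$.
   Context: For integers $m\ge 2$, $n\ge 1$, a valid $(m,n)$-sequence is a sequence $(a_1,\dots,a_{mn})$ with entries in $\{1,\dots,n\}$ in which each $k\in\{1,\dots,n\}$ occurs exactly $m$ times, and such that any two consecutive occurrences of $k$ are separated by exactly $k$ other terms; equivalently, there is an index $\theta_k$ such that $k$ occurs exactly at the positions $\theta_k,\ \theta_k+(k+1),\ \theta_k+2(k+1),\dots,\theta_k+(m-1)(k+1)$ (all in $\{1,\dots,mn\}$). Example: $3\,1\,2\,1\,3\,2$ is a valid $(2,3)$-sequence. The reversal $(a_{mn},\dots,a_1)$ of a valid sequence is again valid; $p(m,n)$ denotes the number of valid $(m,n)$-sequences counted up to reversal (i.e. the number of equivalence classes of valid $(m,n)$-sequences under identifying a sequence with its reversal). *)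

From mathcomp Require Import all_boot all_order all_algebra.
Set Implicit Arguments. Unset Strict Implicit. Unset Printing Implicit Defensive.

(* A sequence (a_1,...,a_{mn}) is represented by s : seq nat with a_i = nth 0 s (i-1). *)
Definition valid_seq (m n : nat) (s : seq nat) : bool :=
  [&& size s == m * n,
      all (fun x => (1 <= x <= n)%N) s,
      [forall k : 'I_n.+1, (1 <= k)%N ==> (count_mem (k : nat) s == m)] &
      [forall k : 'I_n.+1, (1 <= k)%N ==>
         [exists th : 'I_(m * n).+1,
            (1 <= th)%N &&
            [forall j : 'I_m,
               ((th + j * k.+1 <= m * n)%N) &&
               (nth 0 s (th + j * k.+1).-1 == k)]]]].

(* Valid sequences, as tuples with entries in {0..n} (entries are forced to be in {1..n}). *)
Definition valid_tuples (m n : nat) : {set (m * n).-tuple 'I_n.+1} :=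
  [set t | valid_seq m n (map (@nat_of_ord _) (tval t))].

Definition p (m n : nat) : nat :=
  #|[set [set u in valid_tuples m n |
              (map (@nat_of_ord _) (tval u) == map (@nat_of_ord _) (tval t))
           || (map (@nat_of_ord _) (tval u) == rev (map (@nat_of_ord _) (tval t)))]
     | t in valid_tuples m n]|.

From mathcomp Require Import all_boot all_order all_algebra.
Set Implicit Arguments.
Unset Strict Implicit.

(* Weight each position of a valid (m,n)-sequence by 1 if it is a multiple of
   m; the total weight is n.  The m occurrences of k sit in an arithmetic
   progression of difference k+1: if m does not divide k+1 they meet the
   multiples of m exactly once (m is prime), otherwise 0 or m times.  Hence,
   modulo m, n is the number of k <= n with m not dividing k+1, so m divides
   the number (n+1) %/ m of multiples of m in [2, n+1].  Then m^2 divides n+1 - r' with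
   r' = (n+1) %% m, i.e. n = r' - 1 (mod m^2). *)

Lemma sum_dvdn_succ (m q : nat) : 0 < m -> \sum_(i < q) (m %| i.+1) = q %/ m.
Proof.
move=> m_gt0; elim: q => [|q IHq]; first by rewrite big_ord0 div0n.
by rewrite big_ord_recr /= IHq divnS // addnC.
Qed.

Lemma sum_dvdn_affine_coprime (m a b : nat) : prime m -> ~~ (m %| b) ->
  \sum_(j < m) (m %| a + j * b) = 1.
Proof.
case: m => // m pm m_b; have cop_mb : coprime m.+1 b by rewrite prime_coprime.
pose f (j : 'I_m.+1) : 'I_m.+1 := inord ((a + j * b) %% m.+1).
have fE j : f j = (a + j * b) %% m.+1 :> nat by rewrite inordK ?ltn_mod.
have f_inj : injective f.
  suff f_le (j j' : 'I_m.+1) : j <= j' -> f j = f j' -> j = j'.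
    move=> j j' e; case: (leqP j j') => [|/ltnW] le; first exact: f_le.
    exact/esym/f_le.
  move=> le_jj' /(congr1 (@nat_of_ord _)); rewrite !fE => /eqP.
  rewrite eq_sym eqn_modDl eqn_mod_dvd ?leq_mul2r ?le_jj' ?orbT //.
  have lt_m : j' - j < m.+1 by rewrite (leq_ltn_trans (leq_subr _ _)).
  rewrite -mulnBl Gauss_dvdl // /dvdn modn_small // subn_eq0 => le_j'j.
  by apply/val_inj/eqP; rewrite eqn_leq le_jj' le_j'j.
pose is0 (i : 'I_m.+1) : nat := i == ord0.
transitivity (\sum_(j < m.+1) is0 (f j)).
  by apply: eq_bigr => j _; rewrite /is0 /dvdn -fE.
by rewrite -(reindex_inj f_inj (P := xpredT) (F := is0)) big_ord_recl big1.
Qed.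

Lemma sum_dvdn_affine_mod (m a b : nat) : prime m ->
  \sum_(j < m) (m %| a + j * b) = ~~ (m %| b) %[mod m].
Proof.
move=> pm; have [m_b|m_b] := boolP (m %| b); last first.
  by rewrite sum_dvdn_affine_coprime.
rewrite (eq_bigr (fun _ => (m %| a) : nat)) => [|j _]; last first.
  by rewrite dvdn_addl ?dvdn_mull.
by rewrite sum_nat_const card_ord mulnC modnMl mod0n.
Qed.

Lemma count_mem_nth (T : eqType) (x0 x : T) (s : seq T) :
  count_mem x s = #|[set i : 'I_(size s) | nth x0 s i == x]|.
Proof.
rewrite -sum1_count (big_nth x0) big_mkord -sum1_card.
by apply: eq_bigl => i; rewrite inE.
Qed.

Lemma sum_nth_progression (T : eqType) (x0 x : T) (s : seq T) (m th b : nat)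
    (F : nat -> nat) :
  0 < b -> 0 < th -> count_mem x s = m ->
  (forall j : 'I_m, (th + j * b <= size s) && (nth x0 s (th + j * b).-1 == x)) ->
  \sum_(i < size s | nth x0 s i == x) F i.+1 = \sum_(j < m) F (th + j * b).
Proof.
move=> b_gt0 th_gt0 count_x prog.
have pos_lt (j : 'I_m) : (th + j * b).-1 < size s.
  by case/andP: (prog j); rewrite -ltnS prednK ?ltn_addr.
pose pos (j : 'I_m) : 'I_(size s) := Ordinal (pos_lt j).
have pos_inj : injective pos.
  move=> j j' /(congr1 val) /= /(congr1 succn).
  rewrite !prednK ?ltn_addr // => /addnI /eqP; rewrite eqn_mul2r gtn_eqF //=.
  by move/eqP/val_inj.
have pos_im : pos @: setT = [set i : 'I_(size s) | nth x0 s i == x].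
  have card_x : #|[set i : 'I_(size s) | nth x0 s i == x]| = m.
    by rewrite -count_x (count_mem_nth x0).
  apply/eqP; rewrite eqEcard card_imset // cardsT card_ord card_x leqnn andbT.
  apply/subsetP => _ /imsetP[j _ ->].
  by rewrite inE; case/andP: (prog j).
rewrite -big_set /= -pos_im big_imset /=; last by move=> ? ? _ _; apply: pos_inj.
by apply: eq_big => [j|j _]; rewrite ?inE ?prednK ?ltn_addr.
Qed.

Lemma sum_nth_values (s : seq nat) (n : nat) (F : nat -> nat) :
  all (fun x => 1 <= x <= n) s ->
  \sum_(k < n) \sum_(i < size s | nth 0 s i == k.+1) F i = \sum_(i < size s) F i.
Proof.
move=> /allP s_range; under eq_bigr do rewrite big_mkcond /=.
rewrite exchange_big /=; apply: eq_bigr => i _; rewrite -big_mkcond /=.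
have /andP[v_gt0 v_le] := s_range _ (mem_nth 0 (ltn_ord i)).
have v_lt : (nth 0 s i).-1 < n by rewrite prednK.
apply: (big_pred1 (Ordinal v_lt)) => k /=.
by rewrite -val_eqE /= [RHS]eq_sym -[RHS](inj_eq succn_inj) prednK.
Qed.

Lemma valid_seq_dvdn (m n : nat) (s : seq nat) : prime m -> valid_seq m n s ->
  m %| n.+1 %/ m.
Proof.
move=> pm /and4P[/eqP size_s s_range /forallP counts /forallP progs].
have m_gt0 := prime_gt0 pm.
pose w (k : 'I_n) := \sum_(i < size s | nth 0 s i == k.+1) (m %| i.+1).
have sum_w : \sum_(k < n) w k = n.
  by rewrite /w (sum_nth_values (fun i => m %| i.+1)) // sum_dvdn_succ // size_s mulKn.
have w_mod k : w k = ~~ (m %| k.+2) %[mod m].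
  have k_lt : k.+1 < n.+1 by rewrite ltnS.
  move: (counts (inord k.+1)) (progs (inord k.+1)); rewrite !inordK //=.
  move=> /eqP count_k /existsP[th /andP[th_gt0 /forallP prog]].
  have prog_s (j : 'I_m) :
      (th + j * k.+2 <= size s) && (nth 0 s (th + j * k.+2).-1 == k.+1).
    by rewrite size_s; apply: prog.
  rewrite /w (sum_nth_progression (fun i => m %| i) _ th_gt0 count_k prog_s) //.
  exact: sum_dvdn_affine_mod.
have multiples : \sum_(k < n) (m %| k.+2) = n.+1 %/ m.
  rewrite -sum_dvdn_succ // big_ord_recl dvdn1 gtn_eqF ?prime_gt1 //.
have split_n : n = \sum_(k < n) ~~ (m %| k.+2) + n.+1 %/ m.
  rewrite -multiples -big_split /= -{1}(card_ord n) -sum1_card.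
  by apply: eq_bigr => k _; case: (m %| k.+2).
have : n = \sum_(k < n) ~~ (m %| k.+2) %[mod m].
  by rewrite -{1}sum_w -modn_summ (eq_bigr _ (fun k _ => w_mod k)) modn_summ.
rewrite {1}split_n -{2}[\sum_(k < n) _]addn0 => /eqP.
by rewrite eqn_modDl mod0n.
Qed.

Lemma p_neq0_valid (m n : nat) : p m n <> 0 -> exists s, valid_seq m n s.
Proof.
move=> p_neq0; have [t t_valid|no_valid] := pickP [in valid_tuples m n].
  by exists (map (@nat_of_ord _) (tval t)); move: t_valid; rewrite inE.
case: p_neq0; apply/eqP; rewrite cards_eq0; apply/eqP/setP => X.
by rewrite inE; apply/imsetP => -[t t_valid _]; move: (no_valid t); rewrite /= t_valid.
Qed.

Import GRing.Theory Num.Theory.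
Local Open Scope ring_scope.

Theorem theorem1 (m n : nat) (hm : prime m) (hn : (1 <= n)%N) :
  p m n <> 0%N ->
  exists r : int, (-1 <= r) /\ (r <= (m%:Z - 2)) /\
    (n%:Z = r %[mod (m ^ 2)%N%:Z])%Z.
Proof.
move=> /p_neq0_valid[s /(valid_seq_dvdn hm)/dvdnP[q q_def]].
set r := (n.+1 %% m)%N.
have r_lt : (r < m)%N by rewrite ltn_pmod ?prime_gt0.
have n_def : n.+1 = (q * m ^ 2 + r)%N by rewrite {1}(divn_eq n.+1 m) q_def -mulnA.
exists (r%:Z - 1); split; [|split].
- by rewrite lerBrDr addrC subrr.
- by rewrite lerBrDr -addrA (_ : -1 + 2 = 1) // -PoszD addn1 lez_nat.
have -> : n%:Z = q%:Z * (m ^ 2)%N%:Z + (r%:Z - 1).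
  by rewrite addrA -PoszM -PoszD -n_def -addn1 PoszD addrK.
by rewrite modzMDl.
Qed.
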